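(* Let $n=2k$ and let $X\subset\mathbb{P}^{n-1}_\mathbb{C}$ be the smooth quadric $\sum_{j=1}^k z_{2j-1}z_{2j}=0$, with the action of $T_\mathbb{C}=(\mathbb{C}^* )^k$ given by $t\cdot(z_1:\dots:z_n)=(t_1z_1:t_1^{-1}z_2:\dots:t_kz_{2k-1}:t_k^{-1}z_{2k})$ and $T=(S^1)^k\subset T_\mathbb{C}$. Let \[\mu(z_1:\dots:z_n)=\frac{1}{\sum_{i=1}^n|z_i|^2}\sum_{j=1}^k(|z_{2j-1}|^2-|z_{2j}|^2)e_j\] be the moment map and $P=\mu(X)=\mathrm{conv}(\pm e_1,\dots,\pm e_k)$. Then for every $u\in\partial P$ the preimage $\mu^{-1}(u)\cap X$ consists of exactly one $T$-orbit; consequently the GIT quotient $Y_{\lambda(u)}$ is a single point.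
   Context: $e_j$ denotes the $j$-th standard basis vector of $\mathbb{R}^k$. For $u\in P$, $Y_{\lambda(u)}$ denotes the GIT quotient $X^{ss}(u)/\!\!/T_\mathbb{C}$, where $X^{ss}(u)$ is the set of $x\in X$ with $u\in\mu(\overline{T_\mathbb{C}\cdot x})$; it is homeomorphic to $\mu^{-1}(u)/T$. *)

From HB Require Import structures.
From mathcomp Require Import all_boot all_order all_algebra.
From mathcomp Require Import all_classical all_reals all_analysis.
From mathcomp Require Import complex.
Set Implicit Arguments. Unset Strict Implicit. Unset Printing Implicit Defensive.
Import Order.TTheory GRing.Theory Num.Theory.
Import numFieldNormedType.Exports.
Local Open Scope ring_scope.
Local Open Scope classical_set_scope.


Section Quadric.
Variable R : realType.
Variable k : nat.
Local Notation C := (R[i]).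
Local Notation n := (k.*2).

(* Homogeneous coordinates (z_1 : ... : z_n), 0-based: z_{2j-1} is z (ev j),
   z_{2j} is z (od j) for j : 'I_k (0-based). *)
Lemma ev_subproof (j : 'I_k) : (j.*2 < n)%N.
Proof. by rewrite ltn_double. Qed.
Lemma od_subproof (j : 'I_k) : (j.*2.+1 < n)%N.
Proof. by rewrite -doubleS leq_double. Qed.
Definition ev (j : 'I_k) : 'I_n := Ordinal (ev_subproof j).
Definition od (j : 'I_k) : 'I_n := Ordinal (od_subproof j).

Lemma hf_subproof (i : 'I_n) : (i./2 < k)%N.
Proof.
have := ltn_ord i; rewrite -[X in (X < _)%N](odd_double_half i).
case: (odd i) => /= h.
  by rewrite -ltn_double; apply: leq_trans h; rewrite leqnSn.
by rewrite -ltn_double; rewrite add0n in h.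
Qed.
Definition hf (i : 'I_n) : 'I_k := Ordinal (hf_subproof i).

Definition sqmod (x : C) : R := (complex.Re x) ^+ 2 + (complex.Im x) ^+ 2.

(* a point of P^{n-1}: a nonzero vector of C^n (up to C^* scaling) *)
Definition nonzero_vec (z : 'I_n -> C) := exists i, z i != 0.

Definition inX (z : 'I_n -> C) :=
  nonzero_vec z /\ \sum_(j < k) z (ev j) * z (od j) = 0.

Definition tact (t : 'I_k -> C) (z : 'I_n -> C) : 'I_n -> C :=
  fun i => (if odd i then (t (hf i))^-1 else t (hf i)) * z i.

Definition inT (t : 'I_k -> C) := forall j, `|t j| = 1.

Definition same_T_orbit (z w : 'I_n -> C) :=
  exists t, inT t /\ exists l : C, l != 0 /\ w = (fun i => l * tact t z i).

Definition e_ (j : 'I_k) : 'rV[R]_k := delta_mx 0 j.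

Definition mu (z : 'I_n -> C) : 'rV[R]_k :=
  (\sum_(i < n) sqmod (z i))^-1 *:
    \sum_(j < k) (sqmod (z (ev j)) - sqmod (z (od j))) *: e_ j.

Definition Ppoly : set 'rV[R]_k :=
  [set u | exists a b : 'I_k -> R,
     (forall j, 0 <= a j /\ 0 <= b j) /\
     \sum_(j < k) (a j + b j) = 1 /\
     u = \sum_(j < k) (a j *: e_ j + b j *: (- e_ j))].

Definition bdP : set 'rV[R]_k := closure Ppoly `\` interior Ppoly.

End Quadric.

From HB Require Import structures.
From mathcomp Require Import all_boot all_order all_algebra.
From mathcomp Require Import all_classical all_reals all_analysis.
From mathcomp Require Import complex ring lra.
Import Order.TTheory GRing.Theory Num.Theory.
Import numFieldNormedType.Exports.
Local Open Scope ring_scope.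
Local Open Scope classical_set_scope.

(* The boundary of P is the unit sphere of the l1-norm.  If mu z = u with
   |u|_1 = 1, then
     sum_j (|z_2j-1|^2 + |z_2j|^2) = sum_j | |z_2j-1|^2 - |z_2j|^2 |,
   so every pair has at most one nonzero coordinate and the moduli |z_i|^2
   are, up to a common factor, the positive and negative parts of the u_j.
   Two such points differ by a scalar and an element of T; conversely the
   point whose coordinates are the square roots of these parts lies on X. *)

Section PosNegParts.
Context {F : realFieldType}.

Definition pospart (x : F) : F := (`|x| + x) / 2.
Definition negpart (x : F) : F := (`|x| - x) / 2.

Lemma pospart_ge0 (x : F) : 0 <= pospart x.
Proof. by have := ler_norm (- x); rewrite normrN /pospart; lra. Qed.

Lemma negpart_ge0 (x : F) : 0 <= negpart x.
Proof. by have := ler_norm x; rewrite /negpart; lra. Qed.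

Lemma pospartDnegpart (x : F) : pospart x + negpart x = `|x|.
Proof. by rewrite /pospart /negpart; lra. Qed.

Lemma pospartBnegpart (x : F) : pospart x - negpart x = x.
Proof. by rewrite /pospart /negpart; lra. Qed.

Lemma pospartMnegpart (x : F) : pospart x * negpart x = 0.
Proof.
rewrite mulrACA [_ * (_ - _)]mulrC -subr_sqr.
by rewrite real_normK ?num_real // subrr mul0r.
Qed.

End PosNegParts.

Section CrossPolytope.
Context {R : realType} {k : nat}.

Definition l1norm (v : 'rV[R]_k) : R := \sum_(j < k) `|v 0 j|.

Lemma sum_scale_e (c : 'I_k -> R) : \sum_(j < k) c j *: e_ R j = \row_j c j.
Proof. by rewrite [RHS]row_sum_delta; apply: eq_bigr => j _; rewrite mxE. Qed.

Lemma PpolyE (v : 'rV[R]_k) : Ppoly v <->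
  exists a b : 'I_k -> R, (forall j, 0 <= a j /\ 0 <= b j) /\
    \sum_(j < k) (a j + b j) = 1 /\ v = \row_j (a j - b j).
Proof.
have sumE (a b : 'I_k -> R) :
    \sum_(j < k) (a j *: e_ R j + b j *: - e_ R j) = \row_j (a j - b j).
  by rewrite -sum_scale_e; apply: eq_bigr => j _; rewrite scalerN -scalerBl.
by split=> -[a [b [ab_ge0 [sum1 ->]]]]; exists a, b; rewrite sumE.
Qed.

Lemma Ppoly_dim_gt0 (v : 'rV[R]_k) : Ppoly v -> (0 < k)%N.
Proof.
move=> [a [b [_ [sum1 _]]]]; case: (posnP k) => // k0.
by move: sum1; subst k; rewrite big_ord0 => /eqP; rewrite eq_sym oner_eq0.
Qed.

Lemma Ppoly_l1norm_le1 (v : 'rV[R]_k) : Ppoly v -> l1norm v <= 1.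
Proof.
move=> /PpolyE[a [b [ab_ge0 [<- ->]]]]; apply: ler_sum => j _.
have [a_ge0 b_ge0] := ab_ge0 j.
by rewrite mxE (le_trans (ler_normB _ _)) // !ger0_norm.
Qed.

Lemma l1norm_lt1_Ppoly (v : 'rV[R]_k) : (0 < k)%N -> l1norm v < 1 -> Ppoly v.
Proof.
move=> k_gt0 lt1; apply/PpolyE.
(* spread the missing mass 1 - |v|_1 evenly over all 2k vertices *)
pose d := (1 - l1norm v) / (k.*2)%:R.
have d_ge0 : 0 <= d by rewrite divr_ge0 // subr_ge0 ltW.
exists (fun j => pospart (v 0 j) + d), (fun j => negpart (v 0 j) + d); split.
  by move=> j; rewrite !addr_ge0 ?pospart_ge0 ?negpart_ge0.
split; last first.
  by apply/rowP => j; rewrite mxE opprD addrACA subrr addr0 pospartBnegpart.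
rewrite (eq_bigr (fun j => `|v 0 j| + d *+ 2)); last first.
  by move=> j _; rewrite addrACA pospartDnegpart mulr2n.
have k2_neq0 : (k.*2)%:R != 0 :> R by rewrite pnatr_eq0 double_eq0 -lt0n.
rewrite big_split sumr_const card_ord -/(l1norm v) -mulrnA mul2n -mulr_natr.
by rewrite divfK //= addrCA subrr addr0.
Qed.

Lemma l1norm_continuous : continuous l1norm.
Proof.
rewrite /l1norm -fct_sumE.
apply: (big_ind (fun f : 'rV[R]_k -> R => continuous f)) => //.
- by move=> v; exact: cst_continuous.
- by move=> f g f_cont g_cont v; exact: continuousD (f_cont v) (g_cont v).
- move=> j _ v; apply: continuous_comp; first exact: coord_continuous.
  exact: norm_continuous.
Qed.

Lemma bdP_l1norm (u : 'rV[R]_k) : bdP u -> l1norm u = 1.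
Proof.
move=> [cl_u not_int_u].
have le1 : l1norm u <= 1.
  suff : closure (@Ppoly R k) `<=` l1norm @^-1` [set x | x <= 1] by apply.
  rewrite [X in _ `<=` X](closure_id _).1.
    exact/closureS/Ppoly_l1norm_le1.
  apply: (continuous_closedP _).1; first exact: l1norm_continuous.
  exact: closed_le.
have k_gt0 : (0 < k)%N.
  have [v Pv] : @Ppoly R k !=set0.
    by apply/set0P/eqP => P0; move: cl_u; rewrite P0 closure0.
  exact: Ppoly_dim_gt0 Pv.
apply/eqP; rewrite eq_le le1 leNgt; apply/negP => lt1; apply: not_int_u.
have lt1_open : open (l1norm @^-1` [set x | x < 1]).
  by apply: (continuousP _).1; [exact: l1norm_continuous | exact: open_lt].
suff : l1norm @^-1` [set x | x < 1] `<=` (@Ppoly R k)° by apply.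
by rewrite -open_subsetE // => v; exact: l1norm_lt1_Ppoly.
Qed.

End CrossPolytope.

Section PairedCoordinates.
Context {k : nat}.
Local Notation n := (k.*2).

Lemma ev_odd (j : 'I_k) : odd (ev j) = false.
Proof. by rewrite /= odd_double. Qed.

Lemma od_odd (j : 'I_k) : odd (od j) = true.
Proof. by rewrite /= odd_double. Qed.

Lemma hf_ev (j : 'I_k) : hf (ev j) = j.
Proof. by apply: val_inj; rewrite /= doubleK. Qed.

Lemma hf_od (j : 'I_k) : hf (od j) = j.
Proof. by apply: val_inj; rewrite /= uphalf_double. Qed.

Lemma ev_od_ind (P : 'I_n -> Prop) :
  (forall j, P (ev j)) -> (forall j, P (od j)) -> forall i, P i.
Proof.
move=> Pev Pod i; have := odd_double_half i.
case: (odd i) => /= iE.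
  by have -> : i = od (hf i) by apply: val_inj; rewrite /= -[in LHS]iE.
by have -> : i = ev (hf i) by apply: val_inj; rewrite /= -[in LHS]iE.
Qed.

Lemma big_ev_od (M : nmodType) (F : 'I_n -> M) :
  \sum_(i < n) F i = \sum_(j < k) (F (ev j) + F (od j)).
Proof.
rewrite (partition_big (@hf k) xpredT) //=; apply: eq_bigr => j _.
have ev_neq_od : ev j != od j.
  by apply/eqP => /(congr1 val)/eqP; rewrite /= eqn_leq ltnn andbF.
rewrite (bigD1 (ev j)) ?hf_ev //= (bigD1 (od j)) ?hf_od ?eqxx 1?eq_sym //=.
rewrite big1 ?addr0 // => i; elim/ev_od_ind: i => i.
  by rewrite hf_ev => /andP[/andP[/eqP -> /eqP]].
by rewrite hf_od => /andP[/andP[/eqP -> _] /eqP].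
Qed.

End PairedCoordinates.

Section MomentFibre.
Local Open Scope complex_scope.
Context {R : realType} {k : nat}.
Local Notation C := (R[i]).
Local Notation n := (k.*2).

Lemma sqmod_ge0 (x : C) : 0 <= sqmod x.
Proof. by rewrite addr_ge0 ?sqr_ge0. Qed.

Lemma sqmod_eq0 (x : C) : (sqmod x == 0) = (x == 0).
Proof.
case: x => a b; rewrite /sqmod /= paddr_eq0 ?sqr_ge0 // !sqrf_eq0.
by apply/andP/eqP => [[/eqP -> /eqP ->] | [-> ->]].
Qed.

Lemma sqmod_sqrt (x : R) : 0 <= x -> sqmod (Num.sqrt x)%:C = x.
Proof. by move=> x_ge0; rewrite /sqmod /= expr0n addr0 sqr_sqrtr. Qed.

Lemma normc_sqmod (x : C) : `|x| = (Num.sqrt (sqmod x))%:C.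
Proof. by rewrite normc_def. Qed.

Definition sqnorm (z : 'I_n -> C) : R := \sum_(i < n) sqmod (z i).

Lemma sqnorm_gt0 (z : 'I_n -> C) : nonzero_vec z -> 0 < sqnorm z.
Proof.
move=> [i zi_neq0]; rewrite lt_def sumr_ge0 ?andbT => [|j _]; last first.
  exact: sqmod_ge0.
apply: contra zi_neq0 => /eqP/psumr_eq0P sum0.
by rewrite -sqmod_eq0 sum0 // => j _; exact: sqmod_ge0.
Qed.

Lemma mu_row (z : 'I_n -> C) :
  mu z = (sqnorm z)^-1 *: \row_j (sqmod (z (ev j)) - sqmod (z (od j))).
Proof. by rewrite /mu sum_scale_e. Qed.

Definition profile (u : 'rV[R]_k) (i : 'I_n) : R :=
  if odd i then negpart (u 0 (hf i)) else pospart (u 0 (hf i)).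

Lemma profile_ev u j : profile u (ev j) = pospart (u 0 j).
Proof. by rewrite /profile ev_odd hf_ev. Qed.

Lemma profile_od u j : profile u (od j) = negpart (u 0 j).
Proof. by rewrite /profile od_odd hf_od. Qed.

Lemma profile_ge0 u i : 0 <= profile u i.
Proof. by rewrite /profile; case: ifP; rewrite ?negpart_ge0 ?pospart_ge0. Qed.

Lemma sum_profile u : \sum_(i < n) profile u i = l1norm u.
Proof.
rewrite big_ev_od; apply: eq_bigr => j _.
by rewrite profile_ev profile_od pospartDnegpart.
Qed.

(* Both sides of sum_j |a_j - b_j| <= sum_j (a_j + b_j) equal sqnorm z, hence
   |a_j - b_j| = a_j + b_j for every j. *)
Lemma sqmod_fibre (z : 'I_n -> C) (u : 'rV[R]_k) :
  nonzero_vec z -> mu z = u -> l1norm u = 1 ->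
  forall i, sqmod (z i) = sqnorm z * profile u i.
Proof.
move=> z_neq0 mu_z u_l1; have S_gt0 : 0 < sqnorm z by exact: sqnorm_gt0.
pose a j := sqmod (z (ev j)); pose b j := sqmod (z (od j)).
have a_ge0 j : 0 <= a j by exact: sqmod_ge0.
have b_ge0 j : 0 <= b j by exact: sqmod_ge0.
have aBb j : a j - b j = sqnorm z * u 0 j.
  by rewrite -mu_z mu_row !mxE mulrA divff ?mul1r // gt_eqF.
have gap_ge0 j : 0 <= a j + b j - `|a j - b j|.
  by rewrite subr_ge0 (le_trans (ler_normB _ _)) // !ger0_norm.
have gap_sum : \sum_(j < k) (a j + b j - `|a j - b j|) = 0.
  rewrite sumrB; have -> : \sum_(j < k) (a j + b j) = sqnorm z.
    by rewrite /sqnorm big_ev_od.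
  under eq_bigr do rewrite aBb normrM (gtr0_norm S_gt0).
  by rewrite -mulr_sumr -/(l1norm u) u_l1 mulr1 subrr.
have aDb j : a j + b j = sqnorm z * `|u 0 j|.
  apply/eqP; rewrite -subr_eq0 -(gtr0_norm S_gt0) -normrM -aBb.
  exact/eqP/(psumr_eq0P (fun j _ => gap_ge0 j) gap_sum).
elim/(@ev_od_ind k) => j; rewrite ?profile_ev ?profile_od /pospart /negpart;
  by have := aDb j; have := aBb j; rewrite /a /b; lra.
Qed.

Definition profile_point (u : 'rV[R]_k) : 'I_n -> C :=
  fun i => (Num.sqrt (profile u i))%:C.

Lemma sqmod_profile_point u i : sqmod (profile_point u i) = profile u i.
Proof. exact/sqmod_sqrt/profile_ge0. Qed.

Lemma profile_point_inX u : l1norm u = 1 -> inX (profile_point u).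
Proof.
move=> u_l1; split.
  apply: contrapT => /forallNP point0; move: u_l1; rewrite -sum_profile big1.
    by move/eqP; rewrite eq_sym oner_eq0.
  move=> i _; rewrite -sqmod_profile_point; apply/eqP; rewrite sqmod_eq0.
  exact/negPn/negP/point0.
apply: big1 => j _; rewrite -rmorphM -sqrtrM ?profile_ge0 //.
by rewrite profile_ev profile_od pospartMnegpart sqrtr0.
Qed.

Lemma mu_profile_point u : l1norm u = 1 -> mu (profile_point u) = u.
Proof.
move=> u_l1; have S1 : sqnorm (profile_point u) = 1.
  rewrite /sqnorm (eq_bigr _ (fun i _ => sqmod_profile_point u i)).
  by rewrite sum_profile.
rewrite mu_row S1 invr1 scale1r; apply/rowP => j.
by rewrite mxE !sqmod_profile_point profile_ev profile_od pospartBnegpart.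
Qed.

Lemma same_T_orbit_of_sqmod (z w : 'I_n -> C) (r : R) : 0 < r ->
  (forall i, sqmod (w i) = r * sqmod (z i)) ->
  (forall j, z (ev j) = 0 \/ z (od j) = 0) -> same_T_orbit z w.
Proof.
move=> r_gt0 wz pair0; pose l : C := (Num.sqrt r)%:C.
have l_gt0 : 0 < l by rewrite ltcR sqrtr_gt0.
have w0 i : (w i == 0) = (z i == 0).
  by rewrite -!sqmod_eq0 wz mulf_eq0 (gt_eqF r_gt0).
have normw i : `|w i| = l * `|z i|.
  by rewrite !normc_sqmod wz sqrtrM ?ltW // rmorphM.
pose ratio i := if z i == 0 then 1 else w i / (l * z i).
have ratio_norm i : `|ratio i| = 1.
  rewrite /ratio; case: eqP => [_ | /eqP zi_neq0]; first exact: normr1.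
  rewrite normrM normfV normrM (gtr0_norm l_gt0) normw divff //.
  by rewrite mulf_neq0 ?gt_eqF ?normr_gt0.
pose t j := if z (ev j) == 0 then (ratio (od j))^-1 else ratio (ev j).
exists t; split.
  by move=> j; rewrite /t; case: ifP => _; rewrite ?normfV ratio_norm ?invr1.
exists l; split; first by rewrite gt_eqF.
apply/funext => i; rewrite /tact.
have [zi0 | zi_neq0] := eqVneq (z i) 0.
  by rewrite zi0 !mulr0; apply/eqP; rewrite w0 zi0.
suff -> : (if odd i then (t (hf i))^-1 else t (hf i)) = w i / (l * z i).
  by field; rewrite zi_neq0 gt_eqF.
elim/(@ev_od_ind k): i zi_neq0 => j zj_neq0.
  by rewrite ev_odd hf_ev /t /ratio (negPf zj_neq0).
have zev0 : z (ev j) = 0.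
  by case: (pair0 j) => // zod0; rewrite zod0 eqxx in zj_neq0.
by rewrite od_odd hf_od /t /ratio zev0 eqxx invrK (negPf zj_neq0).
Qed.

Lemma fibre_same_T_orbit (z w : 'I_n -> C) (u : 'rV[R]_k) :
  nonzero_vec z -> nonzero_vec w -> mu z = u -> mu w = u -> l1norm u = 1 ->
  same_T_orbit z w.
Proof.
move=> z_neq0 w_neq0 mu_z mu_w u_l1.
have Sz_gt0 : 0 < sqnorm z by exact: sqnorm_gt0.
have Sw_gt0 : 0 < sqnorm w by exact: sqnorm_gt0.
have sqz i : sqmod (z i) = sqnorm z * profile u i by exact: sqmod_fibre.
have sqw i : sqmod (w i) = sqnorm w * profile u i by exact: sqmod_fibre.
apply: (@same_T_orbit_of_sqmod _ _ (sqnorm w / sqnorm z)).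
- exact: divr_gt0.
- by move=> i; rewrite sqz sqw; field; rewrite gt_eqF.
- move=> j; have : sqmod (z (ev j)) * sqmod (z (od j)) = 0.
    by rewrite !sqz profile_ev profile_od mulrACA pospartMnegpart mulr0.
  by move/eqP; rewrite mulf_eq0 !sqmod_eq0 => /orP[] /eqP; [left | right].
Qed.

End MomentFibre.

Theorem lemma3p2 (R : realType) (k : nat) (u : 'rV[R]_k) :
  bdP u ->
  (exists z : 'I_k.*2 -> R[i], inX z /\ mu z = u) /\
  (forall z w : 'I_k.*2 -> R[i],
      inX z -> inX w -> mu z = u -> mu w = u -> same_T_orbit z w).
Proof.
move=> bd_u; have u_l1 : l1norm u = 1 by exact: bdP_l1norm.
split.
  exists (profile_point u).
  by split; [exact: profile_point_inX | exact: mu_profile_point].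
move=> z w [z_neq0 _] [w_neq0 _] mu_z mu_w.
exact: fibre_same_T_orbit mu_z mu_w u_l1.
Qed.
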